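(* Let $z>0$, $\zeta=(z/2)^{1/3}$, and $V_0=\frac{5}{36z^2}-\frac{1}{4(z/2)^{2/3}}=\frac{5-36\zeta^4}{144\zeta^6}$. Let $a,c$ be nonzero constants and $A_{m,k}$ ($m,k\ge0$) the coefficients defined below. For $n\in\mathbb Z\setminus\{0\}$ with $\delta=\operatorname{sgn}(n)$ set $$\psi_n=\zeta^{1/2}e^{-\frac32\delta\zeta^2}\sum_{k=0}^{2|n|-2}A_{|n|-1,k}(\delta\zeta^2)^k,$$ and $\psi_0=0$. Then for all $n\ne0$, $$\frac{\mathrm d^2\psi_n}{\mathrm dz^2}+V_0\psi_n=-\delta\,a\,\psi_{n-\delta}.$$
   Context: The coefficients $A_{m,k}$, $m,k\in\mathbb Z_{\ge0}$ (set to $0$ if an index is negative), are determined by $A_{0,0}=c$, $A_{0,k}=0$ ($k\ge1$), and for $m\ge1$: $A_{m,0}=0$, $A_{m,2m}=\big(\tfrac{3a}{2}\big)^m\frac{c}{m!}$, $A_{m,k}=\frac{3a}{k}A_{m-1,k-2}+\frac{k+1}{3}A_{m,k+1}$ for $k\ge2$, and $A_{m,1}=\frac23A_{m,2}$ (with these conditions $A_{m,k}=0$ for $k>2m$). *)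

From Stdlib Require Import Reals ZArith Lra.
From Coquelicot Require Import Coquelicot.
Open Scope R_scope.

(* For m = M >= 1: A_{M,2M} = (3a/2)^M c / M!, and for 2 <= k < 2M,
   A_{M,k} = 3a/k * A_{M-1,k-2} + (k+1)/3 * A_{M,k+1} (computed downward
   via g j = A_{M,2M-j}); A_{M,1} = 2/3 A_{M,2}; A_{M,0} = 0;
   A_{M,k} = 0 for k > 2M. *)
Fixpoint Arow (a c : R) (m : nat) : nat -> R :=
  match m with
  | O => fun k => if Nat.eqb k 0 then c else 0
  | S m' =>
      let prev := Arow a c m' in
      let M := S m' in
      let fix g (j : nat) : R :=
        match j with
        | O => (3 * a / 2) ^ M * c / INR (fact M)
        | S j' =>
            let k := (2 * M - j)%nat in
            3 * a / INR k * prev (k - 2)%nat + (INR k + 1) / 3 * g j'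
        end in
      fun k =>
        if Nat.eqb k 0 then 0
        else if Nat.eqb k 1 then 2 / 3 * g (2 * M - 2)%nat
        else if Nat.leb k (2 * M) then g (2 * M - k)%nat
        else 0
  end.

Definition A (a c : R) (m k : nat) : R := Arow a c m k.

Definition zeta (z : R) : R := Rpower (z / 2) (1 / 3).

Definition V0 (z : R) : R := 5 / (36 * z ^ 2) - 1 / (4 * Rpower (z / 2) (2 / 3)).

(* psi_n(z); psi_0 = 0. delta = sgn n. sum_f_R0 f N = f 0 + ... + f N. *)
Definition psi (a c : R) (n : Z) (z : R) : R :=
  if Z.eqb n 0 then 0 else
  let d := IZR (Z.sgn n) in
  let m := Z.abs_nat n in
  sqrt (zeta z) * exp (- (3 / 2) * d * (zeta z) ^ 2) *
  sum_f_R0 (fun k => A a c (m - 1) k * (d * (zeta z) ^ 2) ^ k) (2 * m - 2)%nat.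

From Stdlib Require Import Reals ZArith Lra Lia FunctionalExtensionality.
From Coquelicot Require Import Coquelicot.
Open Scope R_scope.

(* With z = 2 zeta^3 and x = delta zeta^2, write psi_n = sqrt zeta * G(x) where
   G(x) = e^(-3x/2) P(x) and P is the polynomial with coefficients A_{|n|-1,k}.
   The factor sqrt zeta is exactly what cancels the first-order term when
   d^2/dz^2 is rewritten in the variable zeta:
     psi'' = sqrt zeta * (G''(x) / (9 zeta^2) - 5 G(x) / (144 zeta^6)),
   and G'' - 9/4 G = e^(-3x/2) (P'' - 3 P').  The equation therefore reduces to
   the polynomial identity 3 P_n' - P_n'' = 9 a x P_(n-delta), which is the
   recursion defining the coefficients A_{m,k}. *)

Lemma zeta_gt0 z : 0 < zeta z.
Proof. apply exp_pos. Qed.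

Lemma zeta_pow z n : 0 < z -> zeta z ^ n = Rpower (z / 2) (1 / 3 * INR n).
Proof.
  intros Hz. unfold zeta. rewrite <- Rpower_pow by apply exp_pos.
  now rewrite Rpower_mult.
Qed.

Lemma zeta_cube z : 0 < z -> z = 2 * zeta z ^ 3.
Proof.
  intros Hz. rewrite zeta_pow by lra.
  replace (1 / 3 * INR 3) with 1 by (simpl; field).
  rewrite Rpower_1 by lra. field.
Qed.

Lemma Rpower_2_3_zeta z : 0 < z -> Rpower (z / 2) (2 / 3) = zeta z ^ 2.
Proof. intros Hz. rewrite zeta_pow by lra. f_equal. simpl. field. Qed.

Lemma is_derive_zeta z : 0 < z -> is_derive zeta z (/ (6 * zeta z ^ 2)).
Proof.
  intros Hz. pose proof (zeta_cube z Hz) as Hc. pose proof (zeta_gt0 z).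
  unfold zeta, Rpower in *. auto_derive; [lra|].
  change (z * / 2) with (z / 2). set (t := exp (1 / 3 * ln (z / 2))) in *.
  clearbody t. subst z. field. lra.
Qed.

Lemma is_derive2_comp_zeta (F F1 F2 : R -> R) z : 0 < z ->
  (forall t, 0 < t -> is_derive F t (F1 t)) ->
  (forall t, 0 < t -> is_derive F1 t (F2 t)) ->
  ex_derive (fun y => F (zeta y)) z /\
  is_derive (Derive (fun y => F (zeta y))) z
    (F2 (zeta z) / (36 * zeta z ^ 4) - F1 (zeta z) / (18 * zeta z ^ 5)).
Proof.
  intros Hz HF HF1.
  set (H t := F1 t / (6 * t ^ 2)).
  assert (D1 : forall y, 0 < y -> is_derive (fun y => F (zeta y)) y (H (zeta y))).
  { intros y Hy. replace (H (zeta y)) with (scal (/ (6 * zeta y ^ 2)) (F1 (zeta y))).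
    - apply (is_derive_comp F zeta); [apply HF, zeta_gt0 | apply is_derive_zeta, Hy].
    - unfold H, scal; simpl; unfold mult; simpl. field.
      pose proof (zeta_gt0 y); lra. }
  split; [eexists; exact (D1 z Hz)|].
  apply is_derive_ext_loc with (fun y => H (zeta y)).
  { apply (filter_imp (fun y => 0 < y)); [|exact (open_gt 0 z Hz)].
    intros y Hy. symmetry. now apply is_derive_unique, D1. }
  assert (DH : forall t, 0 < t ->
    is_derive H t (F2 t / (6 * t ^ 2) - F1 t / (3 * t ^ 3))).
  { intros t Ht. assert (HD : Derive (fun x => F1 x) t = F2 t) by now apply is_derive_unique, HF1.
    unfold H. auto_derive.
    - split; [eexists; now apply HF1|]. split; [|easy]. nra.
    - rewrite HD. field. lra. }
  pose proof (zeta_gt0 z).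
  replace (_ - _) with (scal (/ (6 * zeta z ^ 2))
    (F2 (zeta z) / (6 * zeta z ^ 2) - F1 (zeta z) / (3 * zeta z ^ 3))).
  - apply (is_derive_comp H zeta); [apply DH, zeta_gt0 | apply is_derive_zeta, Hz].
  - unfold scal; simpl; unfold mult; simpl. field. lra.
Qed.

Section SqrtProfile.

Variables (d : R) (G G1 G2 : R -> R).
Hypothesis G_der : forall x, is_derive G x (G1 x).
Hypothesis G1_der : forall x, is_derive G1 x (G2 x).

Lemma is_derive2_sqrt_zeta_profile z : 0 < z ->
  ex_derive (fun y => sqrt (zeta y) * G (d * zeta y ^ 2)) z /\
  is_derive (Derive (fun y => sqrt (zeta y) * G (d * zeta y ^ 2))) z
    (sqrt (zeta z) * (d ^ 2 * G2 (d * zeta z ^ 2) / (9 * zeta z ^ 2)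
                      - 5 * G (d * zeta z ^ 2) / (144 * zeta z ^ 6))).
Proof.
  intros Hz.
  assert (HD : forall x, Derive (fun x => G x) x = G1 x) by (intros; now apply is_derive_unique).
  assert (HD1 : forall x, Derive (fun x => G1 x) x = G2 x) by (intros; now apply is_derive_unique).
  destruct (is_derive2_comp_zeta (fun t => sqrt t * G (d * t ^ 2))
    (fun t => G (d * t ^ 2) / (2 * sqrt t) + 2 * d * t * sqrt t * G1 (d * t ^ 2))
    (fun t => - G (d * t ^ 2) / (4 * t * sqrt t) + 4 * d * sqrt t * G1 (d * t ^ 2)
              + 4 * d ^ 2 * t ^ 2 * sqrt t * G2 (d * t ^ 2)) z Hz) as [Hex Hder].
  - intros t Ht. pose proof (sqrt_lt_R0 t Ht). auto_derive.
    + repeat split; try lra. eexists; apply G_der.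
    + rewrite HD. replace (t * (t * 1)) with (t ^ 2) by ring. field. lra.
  - intros t Ht. pose proof (sqrt_lt_R0 t Ht). auto_derive.
    + repeat split; try lra; eexists; (apply G_der || apply G1_der).
    + rewrite HD, HD1. replace (t * (t * 1)) with (t ^ 2) by ring.
      assert (Hs : t = sqrt t * sqrt t) by (rewrite sqrt_sqrt; lra).
      set (s := sqrt t) in *. clearbody s. subst t. field. lra.
  - split; [exact Hex|]. replace (sqrt (zeta z) * _) with (
      (- G (d * zeta z ^ 2) / (4 * zeta z * sqrt (zeta z))
       + 4 * d * sqrt (zeta z) * G1 (d * zeta z ^ 2)
       + 4 * d ^ 2 * zeta z ^ 2 * sqrt (zeta z) * G2 (d * zeta z ^ 2)) / (36 * zeta z ^ 4)
      - (G (d * zeta z ^ 2) / (2 * sqrt (zeta z))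
         + 2 * d * zeta z * sqrt (zeta z) * G1 (d * zeta z ^ 2)) / (18 * zeta z ^ 5));
      [exact Hder|].
    pose proof (sqrt_lt_R0 _ (zeta_gt0 z)).
    assert (Hs : zeta z = sqrt (zeta z) * sqrt (zeta z))
      by (rewrite sqrt_sqrt; [easy | pose proof (zeta_gt0 z); lra]).
    set (t := zeta z) in *. set (s := sqrt t) in *. clearbody t s. subst t. field. lra.
Qed.

End SqrtProfile.

Definition wave (d : R) (P : R -> R) (y : R) : R :=
  sqrt (zeta y) * exp (- (3 / 2) * d * zeta y ^ 2) * P (d * zeta y ^ 2).

Lemma wave_ode a d (P P1 P2 Q : R -> R) z : 0 < z -> (d = 1 \/ d = -1) ->
  (forall x, is_derive P x (P1 x)) -> (forall x, is_derive P1 x (P2 x)) ->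
  (forall x, 3 * P1 x - P2 x = 9 * a * x * Q x) ->
  ex_derive (wave d P) z /\
  is_derive (Derive (wave d P)) z (- V0 z * wave d P z - d * a * wave d Q z).
Proof.
  intros Hz Hd HP HP1 HPQ.
  assert (HD : forall x, Derive (fun x => P x) x = P1 x) by (intros; now apply is_derive_unique).
  assert (HD1 : forall x, Derive (fun x => P1 x) x = P2 x) by (intros; now apply is_derive_unique).
  set (E x := exp (- (3 / 2) * x)).
  assert (Hw : wave d P = fun y => sqrt (zeta y) * (E (d * zeta y ^ 2) * P (d * zeta y ^ 2))).
  { apply functional_extensionality; intros y. unfold wave, E.
    rewrite Rmult_assoc. do 3 f_equal. ring. }
  rewrite Hw.
  assert (HG : forall x, is_derive (fun x => E x * P x) x (E x * (P1 x - 3 / 2 * P x))).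
  { intros x. unfold E. auto_derive; [eexists; apply HP|]. rewrite HD. ring. }
  assert (HG1 : forall x, is_derive (fun x => E x * (P1 x - 3 / 2 * P x)) x
                  (E x * (P2 x - 3 * P1 x + 9 / 4 * P x))).
  { intros x. unfold E. auto_derive.
    { repeat split; eexists; (apply HP || apply HP1). }
    rewrite HD, HD1. field. }
  destruct (is_derive2_sqrt_zeta_profile d _ _ _ HG HG1 z Hz) as [Hex Hder].
  split; [exact Hex|]. replace (- V0 z * _ - _) with (sqrt (zeta z) *
    (d ^ 2 * (E (d * zeta z ^ 2) * (P2 (d * zeta z ^ 2) - 3 * P1 (d * zeta z ^ 2)
              + 9 / 4 * P (d * zeta z ^ 2))) / (9 * zeta z ^ 2)
     - 5 * (E (d * zeta z ^ 2) * P (d * zeta z ^ 2)) / (144 * zeta z ^ 6)));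
    [exact Hder|].
  unfold V0, wave. rewrite Rpower_2_3_zeta by exact Hz.
  pose proof (zeta_cube z Hz) as Hc. pose proof (zeta_gt0 z).
  specialize (HPQ (d * zeta z ^ 2)).
  replace (exp (- (3 / 2) * d * zeta z ^ 2)) with (E (d * zeta z ^ 2))
    by (unfold E; f_equal; ring).
  set (t := zeta z) in *. clearbody t. subst z.
  replace (P2 (d * t ^ 2)) with (3 * P1 (d * t ^ 2) - 9 * a * (d * t ^ 2) * Q (d * t ^ 2))
    by lra.
  destruct Hd as [-> | ->]; field; lra.
Qed.

Definition poly_eval (b : nat -> R) (N : nat) (x : R) : R :=
  sum_f_R0 (fun k => b k * x ^ k) N.

Definition dcoef (b : nat -> R) (k : nat) : R := INR (S k) * b (S k).

Lemma is_derive_poly_eval b N x :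
  is_derive (poly_eval b N) x (poly_eval (dcoef b) N x - INR (S N) * b (S N) * x ^ N).
Proof.
  induction N as [|N IH].
  - unfold poly_eval; simpl. auto_derive; [easy|]. unfold dcoef; simpl; ring.
  - replace (poly_eval (dcoef b) (S N) x - _) with
      (plus (poly_eval (dcoef b) N x - INR (S N) * b (S N) * x ^ N)
            (INR (S N) * b (S N) * x ^ N)).
    + apply (is_derive_plus (poly_eval b N) (fun y => b (S N) * y ^ S N)); [exact IH|].
      auto_derive; [easy|]. rewrite S_INR. destruct N; simpl; ring.
    + unfold plus, dcoef, poly_eval; simpl. ring.
Qed.

Lemma is_derive_poly_eval_deg b N x : b (S N) = 0 ->
  is_derive (poly_eval b N) x (poly_eval (dcoef b) N x).
Proof.
  intros Hb. replace (poly_eval (dcoef b) N x)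
    with (poly_eval (dcoef b) N x - INR (S N) * b (S N) * x ^ N) by (rewrite Hb; ring).
  apply is_derive_poly_eval.
Qed.

(* Row [S m] of the table read downward from its top entry: [Adown a c m j = A_{m+1, 2m+2-j}]. *)
Definition Adown (a c : R) (m : nat) : nat -> R :=
  fix g (j : nat) : R :=
    match j with
    | O => (3 * a / 2) ^ S m * c / INR (fact (S m))
    | S j' => 3 * a / INR (2 * S m - j) * A a c m (2 * S m - j - 2) +
              (INR (2 * S m - j) + 1) / 3 * g j'
    end.

Lemma A_row0 a c k : A a c 0 k = if Nat.eqb k 0 then c else 0.
Proof. reflexivity. Qed.

Lemma A_rowS a c m k : A a c (S m) k =
  if Nat.eqb k 0 then 0 else if Nat.eqb k 1 then 2 / 3 * Adown a c m (2 * S m - 2)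
  else if Nat.leb k (2 * S m) then Adown a c m (2 * S m - k) else 0.
Proof. reflexivity. Qed.

Lemma Adown_S a c m j : Adown a c m (S j) =
  3 * a / INR (2 * S m - S j) * A a c m (2 * S m - S j - 2) +
  (INR (2 * S m - S j) + 1) / 3 * Adown a c m j.
Proof. reflexivity. Qed.

Lemma A_above a c m k : (2 * m < k)%nat -> A a c m k = 0.
Proof.
  intros Hk. destruct m as [|m].
  - rewrite A_row0. destruct (Nat.eqb_spec k 0); [lia | easy].
  - rewrite A_rowS. destruct (Nat.eqb_spec k 0); [lia|].
    destruct (Nat.eqb_spec k 1); [lia|].
    destruct (Nat.leb_spec k (2 * S m)); [lia | easy].
Qed.

Lemma A_top a c m : A a c m (2 * m) = (3 * a / 2) ^ m * c / INR (fact m).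
Proof.
  destruct m as [|m].
  - rewrite A_row0. simpl. field.
  - rewrite A_rowS. destruct (Nat.eqb_spec (2 * S m) 0); [lia|].
    destruct (Nat.eqb_spec (2 * S m) 1); [lia|].
    destruct (Nat.leb_spec (2 * S m) (2 * S m)); [|lia].
    now rewrite Nat.sub_diag.
Qed.

Lemma A_mid a c m j : (2 <= j < 2 * S m)%nat ->
  A a c (S m) j = 3 * a / INR j * A a c m (j - 2) + (INR j + 1) / 3 * A a c (S m) (S j).
Proof.
  intros Hj. rewrite !A_rowS.
  destruct (Nat.eqb_spec j 0); [lia|]. destruct (Nat.eqb_spec j 1); [lia|].
  destruct (Nat.leb_spec j (2 * S m)); [|lia].
  destruct (Nat.eqb_spec (S j) 0); [lia|]. destruct (Nat.eqb_spec (S j) 1); [lia|].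
  destruct (Nat.leb_spec (S j) (2 * S m)); [|lia].
  replace (2 * S m - j)%nat with (S (2 * S m - S j)) by lia.
  rewrite Adown_S. now replace (2 * S m - S (2 * S m - S j))%nat with j by lia.
Qed.

Lemma A_one a c m : A a c (S m) 1 = 2 / 3 * A a c (S m) 2.
Proof.
  rewrite !A_rowS. simpl Nat.eqb.
  destruct (Nat.leb_spec 2 (2 * S m)); [easy | lia].
Qed.

Lemma A_recurrence a c m k :
  3 * INR (S (S k)) * A a c (S m) (S (S k))
  - INR (S (S k)) * INR (S (S (S k))) * A a c (S m) (S (S (S k)))
  = 9 * a * A a c m k.
Proof.
  assert (Hk : INR (S (S k)) <> 0) by (apply not_0_INR; lia).
  destruct (lt_eq_lt_dec (S (S k)) (2 * S m)) as [[Hlt | Heq] | Hgt].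
  - rewrite (A_mid a c m (S (S k))) by lia. rewrite (S_INR (S (S k))).
    simpl (S (S k) - 2)%nat. rewrite Nat.sub_0_r. field. exact Hk.
  - replace k with (2 * m)%nat in * by lia.
    rewrite (A_above a c (S m) (S (S (S (2 * m))))) by lia.
    rewrite Heq, A_top, A_top, fact_simpl, !mult_INR.
    assert (INR (fact m) <> 0) by apply INR_fact_neq_0.
    assert (INR (S m) <> 0) by (apply not_0_INR; lia).
    simpl pow. simpl (INR 2). field. auto.
  - rewrite !A_above by lia. ring.
Qed.

Definition Apoly (a c : R) (m : nat) : R -> R := poly_eval (A a c m) (2 * m).

Definition Apoly_prev (a c : R) (m : nat) : R -> R :=
  match m with O => fun _ => 0 | S m' => Apoly a c m' end.

Lemma is_derive_Apoly a c m x :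
  is_derive (Apoly a c m) x (poly_eval (dcoef (A a c m)) (2 * m) x).
Proof. apply is_derive_poly_eval_deg, A_above. lia. Qed.

Lemma is_derive_Apoly' a c m x :
  is_derive (poly_eval (dcoef (A a c m)) (2 * m)) x
    (poly_eval (dcoef (dcoef (A a c m))) (2 * m) x).
Proof. apply is_derive_poly_eval_deg. unfold dcoef. rewrite A_above by lia. ring. Qed.

Lemma Apoly_ode a c m x :
  3 * poly_eval (dcoef (A a c m)) (2 * m) x - poly_eval (dcoef (dcoef (A a c m))) (2 * m) x
  = 9 * a * x * Apoly_prev a c m x.
Proof.
  unfold poly_eval, dcoef. rewrite scal_sum, <- minus_sum.
  destruct m as [|m].
  - simpl. ring.
  - replace (2 * S m)%nat with (S (S (2 * m))) by lia.
    rewrite decomp_sum by lia. change (pred (S (S (2 * m)))) with (S (2 * m)).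
    rewrite (sum_eq _ (fun k => A a c m k * x ^ k * (9 * a * x))).
    2: { intros k _. transitivity (9 * a * A a c m k * x ^ S k); [|simpl; ring].
         rewrite <- A_recurrence. ring. }
    rewrite <- scal_sum, tech5, (A_above a c m (S (2 * m))) by lia.
    rewrite A_one. unfold Apoly_prev, Apoly, poly_eval. simpl INR. field.
Qed.

Lemma psi_wave a c n : n <> 0%Z ->
  psi a c n = wave (IZR (Z.sgn n)) (Apoly a c (Z.abs_nat n - 1)).
Proof.
  intros Hn. apply functional_extensionality. intros y. unfold psi, wave, Apoly, poly_eval.
  destruct (Z.eqb_spec n 0); [contradiction|].
  now replace (2 * Z.abs_nat n - 2)%nat with (2 * (Z.abs_nat n - 1))%nat by lia.
Qed.

Lemma psi_sub_sgn a c n z : n <> 0%Z ->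
  psi a c (n - Z.sgn n) z = wave (IZR (Z.sgn n)) (Apoly_prev a c (Z.abs_nat n - 1)) z.
Proof.
  intros Hn. destruct (Z.eq_dec (Z.abs n) 1) as [H1 | H1].
  - replace (n - Z.sgn n)%Z with 0%Z by lia.
    replace (Z.abs_nat n - 1)%nat with O by lia. unfold psi, wave, Apoly_prev; simpl. ring.
  - rewrite psi_wave by lia.
    replace (Z.sgn (n - Z.sgn n)) with (Z.sgn n) by lia.
    replace (Z.abs_nat n - 1)%nat with (S (Z.abs_nat (n - Z.sgn n) - 1)) by lia.
    reflexivity.
Qed.

Theorem mainTheorem11 :
  forall a c : R, a <> 0 -> c <> 0 ->
  forall n : Z, n <> 0%Z ->
  forall z : R, 0 < z ->
    ex_derive (psi a c n) z /\
    is_derive (Derive (psi a c n)) z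
      (- V0 z * psi a c n z - IZR (Z.sgn n) * a * psi a c (n - Z.sgn n)%Z z).
Proof.
  intros a c _ _ n Hn z Hz.
  rewrite psi_sub_sgn, psi_wave by exact Hn.
  set (m := (Z.abs_nat n - 1)%nat).
  apply wave_ode with (P1 := poly_eval (dcoef (A a c m)) (2 * m))
    (P2 := poly_eval (dcoef (dcoef (A a c m))) (2 * m)).
  - exact Hz.
  - destruct n; [contradiction | left | right]; reflexivity.
  - apply is_derive_Apoly.
  - apply is_derive_Apoly'.
  - apply Apoly_ode.
Qed.
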